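(* Let $\Gamma$ be a grid and let $r_1\leq r_2$. For each $i\in\{1,2\}$ let $Z_i$ be the $(r_i\times r_i)$-grid and suppose that $Z_i$ is a minor of $\Gamma$ with minor mapping $\mu_i$. Assume that $\mu_1(V(Z_1))\cap\mu_2(V(Z_2))=\emptyset$. For each $i\in\{1,2\}$ let $Y_i$ be the set of vertices in the first row of $Z_i$, for each $v\in Y_i$ pick some $q(v)\in\mu_i(v)$, and let $W_i=\{q(v): v\in Y_i\}$. Then $W_1\cup W_2$ is $1/384$-cut-linked in $\Gamma$.
   Context: The $(r\times\ell)$-grid is the Cartesian product $P_r\times P_\ell$ of paths; a grid is such a graph. If $H$ is a minor of $G$ (obtained by edge contractions, edge deletions and vertex deletions), the minor mapping $\mu:V(H)\to 2^{V(G)}$ sends each vertex of $H$ to the set of vertices of $G$ contracted into it; for $Z\subseteq V(H)$, $\mu(Z)=\bigcup_{v\in Z}\mu(v)$. A set $X\subseteq V(G)$ is $\alpha$-cut-linked in $G$ if for every partition of $V(G)$ into $\{A,B\}$ we have $|E(A,B)|\geq\alpha\cdot\min\{|A\cap X|,|B\cap X|\}$. *)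

(* Simple graphs are symmetric irreflexive relations on a finType. *)
From mathcomp Require Import all_boot all_order all_algebra rat.
Set Implicit Arguments. Unset Strict Implicit. Unset Printing Implicit Defensive.
Import Order.TTheory GRing.Theory Num.Theory.

Definition grid_adj (m n : nat) : rel ('I_m * 'I_n) :=
  fun x y =>
    ((x.1 == y.1) && ((x.2.+1 == y.2 :> nat) || (y.2.+1 == x.2 :> nat))) ||
    ((x.2 == y.2) && ((x.1.+1 == y.1 :> nat) || (y.1.+1 == x.1 :> nat))).

Definition connected_in (T : finType) (e : rel T) (S : {set T}) : Prop :=
  forall x y, x \in S -> y \in S ->
    connect (fun a b => [&& e a b, a \in S & b \in S]) x y.

Definition minor_map (TH TG : finType) (eH : rel TH) (eG : rel TG)
    (mu : TH -> {set TG}) : Prop :=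
  [/\ forall v, mu v != set0,
      forall v, connected_in eG (mu v),
      forall u v, u != v -> [disjoint mu u & mu v]
    & forall u v, eH u v ->
        exists x y, [/\ x \in mu u, y \in mu v & eG x y]].

Definition mu_img (TH TG : finType) (mu : TH -> {set TG}) (Z : {set TH}) : {set TG} :=
  \bigcup_(v in Z) mu v.

(* E(A,B): the set of edges with one end in A and the other in B
   (A, B disjoint, so ordered pairs count each edge once). *)
Definition cut_edges (T : finType) (e : rel T) (A B : {set T}) : {set T * T} :=
  [set p | [&& p.1 \in A, p.2 \in B & e p.1 p.2]].

Definition cut_linked (T : finType) (e : rel T) (alpha : rat) (X : {set T}) : Prop :=
  forall A B : {set T}, [disjoint A & B] -> A :|: B = setT ->
    (alpha * (minn #|A :&: X| #|B :&: X|)%:R <= (#|cut_edges e A B|)%:R)%R.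

Definition first_row (r : nat) : {set 'I_r * 'I_r} := [set v : 'I_r * 'I_r | nat_of_ord v.1 == 0].

(* Let B be the complement of A and s the number of edges between A and B.  A connected set
   meeting both A and B contains a cut edge, so among pairwise disjoint connected sets at most s
   straddle the cut; this applies to the rows and columns of the grid and to the rows and
   columns of each model (unions of branch sets).
   If every line of the grid meets A, each vertex of B lies on a straddling row and a
   straddling column of the grid, so |B| <= s^2.  A first-row representative in B lies in a
   model column that straddles or lies inside B.  If some model column lies inside B, every
   model row crosses it, so all but s model rows lie inside B as well; the crossings of rows
   and columns inside B are disjoint nonempty branch sets in B, so at most 2s model columns lie
   inside B.  Hence |B \cap (W1 \cup W2)| <= 6s.
   If instead A and B both contain a line of the grid, every line of the other direction
   straddles, so s >= min(a, b); and an (r x r)-grid model forces r <= min(a, b), because the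
   columns of the model are disjoint and all meet a common level set of the row (or column)
   index.  Hence |W1 \cup W2| <= r1 + r2 <= 2s. *)

From mathcomp Require Import all_boot all_order all_algebra rat.
From mathcomp Require Import zify.
From mathcomp.algebra_tactics Require Import lra.
Import GRing.Theory Num.Theory.
Set Implicit Arguments. Unset Strict Implicit. Unset Printing Implicit Defensive.

Lemma leq_card_witness (I K : finType) (D : {set I}) (E : {set K}) (R : I -> K -> bool) :
  (forall i, i \in D -> exists2 k, k \in E & R i k) ->
  (forall i i' k, i \in D -> i' \in D -> R i k -> R i' k -> i = i') ->
  #|D| <= #|E|.
Proof.
move=> R_ex R_uniq; pose f i := [pick k in E | R i k].
have fP i : i \in D -> exists2 k, f i = Some k & (k \in E) && R i k.
  move=> iD; rewrite /f; case: pickP => [k kP|noK]; first by exists k.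
  by have [k kE Rik] := R_ex i iD; move: (noK k); rewrite kE Rik.
have f_inj : {in D &, injective f}.
  move=> i i' iD i'D; have [k -> /andP[_ Rik]] := fP i iD.
  by have [k' -> /andP[_ Ri'k']] := fP i' i'D => -[Ek]; apply: (R_uniq i i' k) => //; rewrite Ek.
rewrite -(card_in_imset f_inj) -(card_imset E (@Some_inj _)).
apply/subset_leq_card/subsetP => _ /imsetP[i iD ->].
by have [k -> /andP[kE _]] := fP i iD; apply: imset_f.
Qed.

Lemma ord_consecutive_const n (Q : pred 'I_n) :
  (forall k k' : 'I_n, k.+1 = k' :> nat -> Q k = Q k') -> forall k k', Q k = Q k'.
Proof.
case: n Q => [|n] Q Q_step; first by case.
suff Q0 (k : 'I_n.+1) : Q k = Q ord0 by move=> k k'; rewrite !Q0.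
case: k => i; elim: i => [|i IHi] lt_i_n; first by congr Q; apply: val_inj.
by rewrite -(IHi (ltnW lt_i_n)); symmetry; apply: Q_step.
Qed.

Section Connectivity.
Variables (T : finType) (e : rel T).

Lemma connected_in_cross (S : {set T}) (P : pred T) x y :
  connected_in e S -> x \in S -> y \in S -> P x -> ~~ P y ->
  exists u v, [/\ u \in S, v \in S, e u v, P u & ~~ P v].
Proof.
move=> S_conn xS yS Px Py; have /connectP[p] := S_conn x y xS yS.
elim: p x xS Px => [|z p IHp] x xS Px /=; first by move=> _ yx; rewrite yx Px in Py.
case/andP=> /and3P[exz _ zS] zp ylast.
by case: (boolP (P z)) => Pz; [apply: IHp zp ylast | exists x, z].
Qed.

Lemma connected_in_ivt (S : {set T}) (h : T -> nat) x y c :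
  (forall u v, e u v -> h v <= (h u).+1) ->
  connected_in e S -> x \in S -> y \in S -> h x <= c <= h y ->
  exists2 z, z \in S & h z = c.
Proof.
move=> h_step S_conn xS yS /andP[hxc hcy].
have [<-|hx_neq_c] := eqVneq (h x) c; first by exists x.
have hx : h x < c by rewrite ltn_neqAle hx_neq_c hxc.
have hy : ~~ (h y < c) by rewrite -leqNgt.
have [u [v [_ vS euv hu hv]]] := connected_in_cross (P := fun z => h z < c) S_conn xS yS hx hy.
by exists v => //; have := h_step u v euv; move: hu hv => /=; lia.
Qed.

Lemma connected_in_set1 x : connected_in e [set x].
Proof. by move=> y z /set1P-> /set1P->; apply: connect0. Qed.

Hypothesis e_sym : symmetric e.

Lemma connected_in_bigcup n (S : 'I_n -> {set T}) :
  (forall k, connected_in e (S k)) ->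
  (forall k k' : 'I_n, k.+1 = k' :> nat ->
     exists u v, [/\ u \in S k, v \in S k' & e u v]) ->
  connected_in e (\bigcup_(k < n) S k).
Proof.
set U := \bigcup_(k < n) S k => S_conn S_adj x y /bigcupP[kx _ xS] /bigcupP[ky _ yS].
pose P := connect (fun u v => [&& e u v, u \in U & v \in U]) x.
have SU k : S k \subset U by apply: bigcup_sup.
have P_edge u v : u \in U -> v \in U -> e u v -> P u = P v.
  move=> uU vU euv; apply/idP/idP => Pw; apply: (connect_trans Pw); apply: connect1.
    by rewrite /= euv uU vU.
  by rewrite /= e_sym euv uU vU.
have P_fill k z : z \in S k -> P z -> S k \subset P.
  move=> zS Pz; apply/subsetP => w wS; apply/negPn/negP => Pw.
  have [u [v [uS vS euv Pu Pv]]] := connected_in_cross (S_conn k) zS wS Pz Pw.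
  by rewrite -(P_edge u v) ?Pu // (subsetP (SU k)) in Pv.
have Q_step (k k' : 'I_n) : k.+1 = k' :> nat -> (S k \subset P) = (S k' \subset P).
  move=> kk'; have [u [v [uS vS euv]]] := S_adj k k' kk'.
  have Puv : P u = P v by apply: P_edge; [apply: (subsetP (SU k)) | apply: (subsetP (SU k')) |].
  apply/idP/idP => /subsetP sub_P.
    by apply: (P_fill k' v) => //; rewrite -Puv; apply: sub_P.
  by apply: (P_fill k u) => //; rewrite Puv; apply: sub_P.
have /subsetP : S ky \subset P.
  by rewrite -(ord_consecutive_const Q_step kx ky); apply: P_fill xS (connect0 _ x).
by apply.
Qed.

End Connectivity.

Arguments connected_in_set1 {T e} x.
Arguments connected_in_bigcup {T e} e_sym {n S} S_conn S_adj.

Definition straddles (T : finType) (A S : {set T}) : bool :=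
  ~~ (S \subset A) && ~~ (S \subset ~: A).

Section Cuts.
Variables (T : finType) (e : rel T).

Lemma card_cut_edgesC (A B : {set T}) :
  symmetric e -> #|cut_edges e B A| = #|cut_edges e A B|.
Proof.
move=> e_sym; suff sub C D : #|cut_edges e C D| <= #|cut_edges e D C|.
  by apply/eqP; rewrite eqn_leq !sub.
have swap_inj : injective (fun p : T * T => (p.2, p.1)) by move=> [? ?] [? ?] [-> ->].
rewrite -(card_imset _ swap_inj); apply/subset_leq_card/subsetP => _ /imsetP[[u v] + ->].
by rewrite !inE /= e_sym => /and3P[-> -> ->].
Qed.

Lemma card_straddling_le_cut (J : finType) (S : J -> {set T}) (A : {set T}) :
  (forall j, connected_in e (S j)) ->
  (forall j j', j != j' -> [disjoint S j & S j']) ->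
  #|[set j | straddles A (S j)]| <= #|cut_edges e A (~: A)|.
Proof.
move=> S_conn S_disj.
apply: (leq_card_witness (R := fun j p => p.1 \in S j)) => [j | j j' p _ _ pj pj'].
  rewrite inE => /andP[/subsetPn[y yS yA] /subsetPn[x xS]]; rewrite inE negbK => xA.
  have [u [v [uS _ euv uA vA]]] :=
    connected_in_cross (P := fun z => z \in A) (S_conn j) xS yS xA yA.
  by exists (u, v); rewrite // !inE /= uA vA euv.
by case: (eqVneq j j') => // /S_disj/disjointFr/(_ pj); rewrite pj'.
Qed.

End Cuts.

Lemma grid_adj_sym m n : symmetric (@grid_adj m n).
Proof.
move=> u v; rewrite /grid_adj (eq_sym v.1) (eq_sym v.2).
by rewrite (orbC (v.2.+1 == _)) (orbC (v.1.+1 == _)).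
Qed.

Definition branch_col (T : finType) r (mu : 'I_r * 'I_r -> {set T}) (j : 'I_r) : {set T} :=
  \bigcup_(i < r) mu (i, j).

(* Rows of the model are handled as columns of its transpose. *)
Definition branch_tr (T : finType) r (mu : 'I_r * 'I_r -> {set T}) : 'I_r * 'I_r -> {set T} :=
  fun v => mu (v.2, v.1).

Section MinorLines.
Variables (T : finType) (e : rel T) (r : nat) (mu : 'I_r * 'I_r -> {set T}).
Hypothesis mu_minor : minor_map (@grid_adj r r) e mu.

Lemma minor_map_tr : minor_map (@grid_adj r r) e (branch_tr mu).
Proof.
case: mu_minor => mu_n0 mu_conn mu_disj mu_adj; split=> [v|v|u v uv|u v uv].
- exact: mu_n0.
- exact: mu_conn.
- apply: mu_disj; apply: contra_neq uv.
  by case: u v => [? ?] [? ?] /= [-> ->].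
- by apply: mu_adj; rewrite /grid_adj /= orbC.
Qed.

Lemma branch_col_sub i j : mu (i, j) \subset branch_col mu j.
Proof. exact: (bigcup_sup i). Qed.

Lemma branch_col_disjoint j j' : j != j' -> [disjoint branch_col mu j & branch_col mu j'].
Proof.
case: mu_minor => _ _ mu_disj _ jj'; rewrite -setI_eq0; apply/eqP/setP => z; rewrite !inE.
apply/negP => /andP[/bigcupP[i _ zi] /bigcupP[i' _ zi']].
have /mu_disj/disjointFr/(_ zi) : (i, j) != (i', j') by rewrite xpair_eqE negb_and jj' orbT.
by rewrite zi'.
Qed.

Hypothesis e_sym : symmetric e.

Lemma branch_col_connected j : connected_in e (branch_col mu j).
Proof.
case: mu_minor => _ mu_conn _ mu_adj; apply: connected_in_bigcup => // k k' kk'.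
by apply: mu_adj; rewrite /grid_adj /= eqxx kk' eqxx orbT.
Qed.

End MinorLines.

Arguments branch_col_connected {T e r mu} mu_minor e_sym j.

Section MinorWidth.
Variables (T : finType) (e : rel T) (h : T -> nat).
Hypothesis e_sym : symmetric e.
Hypothesis h_step : forall u v, e u v -> h v <= (h u).+1.

Lemma minor_level_set_from_row r (mu : 'I_r * 'I_r -> {set T}) i0 x0 :
  minor_map (@grid_adj r r) e mu ->
  branch_col (branch_tr mu) i0 \subset [set v | h v <= x0] ->
  (forall j, exists2 v, v \in branch_col mu j & x0 <= h v) ->
  r <= #|[set v | h v == x0]|.
Proof.
move=> mu_minor row_le col_ge; have [mu_n0 _ _ _] := mu_minor.
rewrite -{1}[r]card_ord -cardsT.
apply: (leq_card_witness (R := fun j v => v \in branch_col mu j)) => [j _ | j j' v _ _ vj vj'].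
  have [w0 w0mu] := set0Pn _ (mu_n0 (i0, j)).
  have w0col := subsetP (branch_col_sub mu i0 j) w0 w0mu.
  have := subsetP row_le w0 (subsetP (branch_col_sub (branch_tr mu) j i0) w0 w0mu).
  rewrite inE => hw0; have [w1 w1col hw1] := col_ge j.
  have [z zcol hz] := connected_in_ivt h_step (branch_col_connected mu_minor e_sym j)
    w0col w1col (introT andP (conj hw0 hw1)).
  by exists z; rewrite // inE hz.
by case: (eqVneq j j') => // /(branch_col_disjoint mu_minor)/disjointFr/(_ vj); rewrite vj'.
Qed.

Lemma minor_level_set r (mu : 'I_r * 'I_r -> {set T}) :
  minor_map (@grid_adj r r) e mu -> exists x0, r <= #|[set v | h v == x0]|.
Proof.
case: r mu => [|r] mu mu_minor; first by exists 0.
(* [line (true, j)] is the j-th column and [line (false, i)] the i-th row of the model; the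
   level x0 is the least, over all lines, of the maximum of h along the line. *)
pose line (L : bool * 'I_r.+1) := branch_col (if L.1 then mu else branch_tr mu) L.2.
pose top L := \max_(v in line L) h v.
have line_n0 L : 0 < #|line L|.
  have [mu_n0 _ _ _] : minor_map (@grid_adj _ _) e (if L.1 then mu else branch_tr mu).
    by case: L.1; [apply: mu_minor | apply: minor_map_tr].
  have [w wmu] := set0Pn _ (mu_n0 (ord0, L.2)).
  by apply/card_gt0P; exists w; apply: (subsetP (branch_col_sub _ ord0 L.2)).
have [[b0 k0] _ top_min] := @arg_minnP _ (true, ord0) xpredT top isT.
have line_le : line (b0, k0) \subset [set v | h v <= top (b0, k0)].
  by apply/subsetP => v vL; rewrite inE; apply: (leq_bigmax_cond v vL).
have line_ge L : exists2 v, v \in line L & top (b0, k0) <= h v.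
  by have [v vL top_v] := eq_bigmax_cond h (line_n0 L); exists v; rewrite // -top_v top_min.
exists (top (b0, k0)); case: b0 line_le line_ge {top_min} => /= line_le line_ge.
  apply: (minor_level_set_from_row (minor_map_tr mu_minor) line_le) => j.
  exact: (line_ge (false, j)).
apply: (minor_level_set_from_row mu_minor line_le) => j.
exact: (line_ge (true, j)).
Qed.

Lemma minor_le_card_key (K : finType) (key : T -> K) r (mu : 'I_r * 'I_r -> {set T}) :
  (forall u v, h u = h v -> key u = key v -> u = v) ->
  minor_map (@grid_adj r r) e mu -> r <= #|K|.
Proof.
move=> key_inj /minor_level_set[x0 /leq_trans]; apply.
have key_inj_level : {in [set v | h v == x0] &, injective key}.
  by move=> u v; rewrite !inE => /eqP hu /eqP hv; apply: key_inj; rewrite hu hv.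
by rewrite -(card_in_imset key_inj_level) max_card.
Qed.

End MinorWidth.

Lemma first_row_snd_inj r : {in first_row r &, injective snd}.
Proof.
move=> [i j] [i' j'] /[!inE] /= /eqP i0 /eqP i'0 /= jj'.
by congr pair => //; apply: ord_inj; rewrite i0 i'0.
Qed.

Lemma card_first_row r : #|first_row r| <= r.
Proof.
rewrite -(card_in_imset (@first_row_snd_inj r)).
by apply: leq_trans (max_card _) _; rewrite card_ord.
Qed.

Section MinorCut.
Variables (T : finType) (e : rel T) (A : {set T}).
Hypothesis e_sym : symmetric e.

Lemma straddles_or_subsetC (S : {set T}) z : z \in S -> z \notin A ->
  straddles A S || (S \subset ~: A).
Proof.
move=> zS zA; rewrite /straddles; case: (S \subset ~: A); rewrite ?orbT // orbF andbT.
by apply/subsetPn; exists z.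
Qed.

Lemma card_straddling_branch_cols r (mu : 'I_r * 'I_r -> {set T}) :
  minor_map (@grid_adj r r) e mu ->
  #|[set j | straddles A (branch_col mu j)]| <= #|cut_edges e A (~: A)|.
Proof.
move=> mu_minor; apply: card_straddling_le_cut => [j | j j' jj'].
- exact: branch_col_connected mu_minor e_sym j.
- exact: (branch_col_disjoint mu_minor jj').
Qed.

Section Minor.
Variables (r : nat) (mu : 'I_r * 'I_r -> {set T}).
Hypothesis mu_minor : minor_map (@grid_adj r r) e mu.

Lemma card_branch_rows_cols_sub (B : {set T}) :
  #|[set i | branch_col (branch_tr mu) i \subset B]| * #|[set j | branch_col mu j \subset B]|
    <= #|B|.
Proof.
have [mu_n0 _ mu_disj _] := mu_minor.
rewrite -cardsX; apply: (leq_card_witness (R := fun ij v => v \in mu ij)).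
  move=> [i j] /setXP[_]; rewrite inE => /subsetP colB.
  have [v vmu] := set0Pn _ (mu_n0 (i, j)).
  by exists v => //; apply/colB/(subsetP (branch_col_sub mu i j)).
move=> ij ij' v _ _ vij vij'.
by case: (eqVneq ij ij') => // /mu_disj/disjointFr/(_ vij); rewrite vij'.
Qed.

Lemma card_branch_cols_compl_le :
  #|~: A| <= #|cut_edges e A (~: A)| ^ 2 ->
  #|[set j | branch_col mu j \subset ~: A]| <= 2 * #|cut_edges e A (~: A)|.
Proof.
set s := #|cut_edges e A (~: A)|; set C := [set j | _] => card_out.
have [-> | [j0 j0C]] := set_0Vmem C; first by rewrite cards0.
set Rows := [set i | branch_col (branch_tr mu) i \subset ~: A].
set Straddling := [set i | straddles A (branch_col (branch_tr mu) i)].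
have Straddling_le : #|Straddling| <= s := card_straddling_branch_cols (minor_map_tr mu_minor).
have rows_cover : r <= #|Straddling| + #|Rows|.
  rewrite -{1}[r]card_ord -cardsT; apply: leq_trans (leq_card_setU Straddling Rows).
  apply/subset_leq_card/subsetP => i _; have [mu_n0 _ _ _] := mu_minor.
  have [z zmu] := set0Pn _ (mu_n0 (i, j0)).
  have zA : z \notin A.
    move: j0C; rewrite inE => /subsetP/(_ z (subsetP (branch_col_sub mu i j0) z zmu)).
    by rewrite inE.
  rewrite !inE; apply: straddles_or_subsetC zA.
  exact: (subsetP (branch_col_sub (branch_tr mu) j0 i)).
have prod_le : #|Rows| * #|C| <= s ^ 2 := leq_trans (card_branch_rows_cols_sub (~: A)) card_out.
have C_le : #|C| <= r by rewrite -[leqRHS]card_ord max_card.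
nia.
Qed.

Lemma card_reps_compl_le_cut (q : 'I_r * 'I_r -> T) :
  (forall v, v \in first_row r -> q v \in mu v) ->
  #|~: A| <= #|cut_edges e A (~: A)| ^ 2 ->
  #|~: A :&: q @: first_row r| <= 3 * #|cut_edges e A (~: A)|.
Proof.
move=> qP card_out; set F := [set v in first_row r | q v \notin A].
have F_sub : F \subset first_row r by apply/subsetP => v; rewrite inE => /andP[].
have reps_sub : ~: A :&: q @: first_row r \subset q @: F.
  apply/subsetP => w /setIP[wA /imsetP[v vF wq]].
  by rewrite wq; apply: imset_f; rewrite inE vF -in_setC -wq.
apply: leq_trans (subset_leq_card reps_sub) _; apply: leq_trans (leq_imset_card _ _) _.
rewrite -(card_in_imset (sub_in2 (subsetP F_sub) (@first_row_snd_inj r))).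
apply: leq_trans (_ : _ <= #|[set j | straddles A (branch_col mu j)]
                        :|: [set j | branch_col mu j \subset ~: A]|) _.
  apply/subset_leq_card/subsetP => _ /imsetP[[i j] /setIdP[vF qA] ->].
  rewrite !inE; apply: straddles_or_subsetC qA.
  exact: (subsetP (branch_col_sub mu i j)) _ (qP _ vF).
apply: leq_trans (leq_card_setU _ _) _.
have := card_straddling_branch_cols mu_minor; have := card_branch_cols_compl_le card_out.
lia.
Qed.

End Minor.

End MinorCut.

Definition grid_row a b (i : 'I_a) : {set 'I_a * 'I_b} := [set v | v.1 == i].
Definition grid_col a b (j : 'I_b) : {set 'I_a * 'I_b} := [set v | v.2 == j].
Arguments grid_row {a b} i.
Arguments grid_col {a b} j.

Definition has_grid_line a b (S : {set 'I_a * 'I_b}) : bool :=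
  [exists i, grid_row i \subset S] || [exists j, grid_col j \subset S].

Section GridCut.
Variables a b : nat.
Local Notation grid := (@grid_adj a b).

Lemma grid_row_connected i : connected_in grid (grid_row i).
Proof.
have -> : grid_row i = \bigcup_(j < b) [set (i, j)].
  apply/setP => -[i' j]; rewrite !inE; apply/eqP/bigcupP => [/= -> | [j' _]].
    by exists j; rewrite ?inE.
  by rewrite inE => /eqP[].
apply: (connected_in_bigcup (@grid_adj_sym a b)) => [j | j j' jj'].
  exact: connected_in_set1 _.
by exists (i, j), (i, j'); rewrite !inE /grid_adj /= !eqxx jj' eqxx.
Qed.

Lemma grid_col_connected j : connected_in grid (grid_col j).
Proof.
have -> : grid_col j = \bigcup_(i < a) [set (i, j)].
  apply/setP => -[i j']; rewrite !inE; apply/eqP/bigcupP => [/= -> | [i' _]].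
    by exists i; rewrite ?inE.
  by rewrite inE => /eqP[].
apply: (connected_in_bigcup (@grid_adj_sym a b)) => [i | i i' ii'].
  exact: connected_in_set1 _.
by exists (i, j), (i', j); rewrite !inE /grid_adj /= !eqxx ii' eqxx orbT.
Qed.

Lemma grid_adj_step u v : grid u v -> (v.1 <= u.1.+1) && (v.2 <= u.2.+1).
Proof.
case: u v => [u1 u2] [v1 v2]; rewrite /grid_adj /=.
by case/orP => /andP[/eqP-> /orP[] /eqP]; lia.
Qed.

Lemma grid_minor_le_dims r (mu : 'I_r * 'I_r -> {set 'I_a * 'I_b}) :
  minor_map (@grid_adj r r) grid mu -> r <= minn a b.
Proof.
move=> mu_minor; rewrite leq_min; apply/andP; split; rewrite -[leqRHS]card_ord.
- apply: (minor_le_card_key (h := fun v => val v.2) (key := fst) (@grid_adj_sym a b) _ _ mu_minor).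
    by move=> u v /grid_adj_step/andP[].
  by move=> [i j] [i' j'] /= /ord_inj-> ->.
- apply: (minor_le_card_key (h := fun v => val v.1) (key := snd) (@grid_adj_sym a b) _ _ mu_minor).
    by move=> u v /grid_adj_step/andP[].
  by move=> [i j] [i' j'] /= /ord_inj-> ->.
Qed.

Variable A : {set 'I_a * 'I_b}.

Lemma card_straddling_grid_rows :
  #|[set i | straddles A (grid_row i)]| <= #|cut_edges grid A (~: A)|.
Proof.
apply: card_straddling_le_cut => [i | i i' ii']; first exact: grid_row_connected.
by rewrite disjoints_subset; apply/subsetP => v; rewrite !inE => /eqP->.
Qed.

Lemma card_straddling_grid_cols :
  #|[set j | straddles A (grid_col j)]| <= #|cut_edges grid A (~: A)|.
Proof.
apply: card_straddling_le_cut => [j | j j' jj']; first exact: grid_col_connected.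
by rewrite disjoints_subset; apply/subsetP => v; rewrite !inE => /eqP->.
Qed.

Lemma grid_dims_le_cut :
  has_grid_line A -> has_grid_line (~: A) -> minn a b <= #|cut_edges grid A (~: A)|.
Proof.
have cols_straddle i1 i2 : grid_row i1 \subset A -> grid_row i2 \subset ~: A ->
    b <= #|cut_edges grid A (~: A)|.
  move=> /subsetP row1 /subsetP row2; apply: leq_trans card_straddling_grid_cols.
  rewrite -[leqLHS]card_ord -cardsT; apply/subset_leq_card/subsetP => j _.
  rewrite inE; apply/andP; split; apply/subsetPn.
    by exists (i2, j); rewrite ?inE // -in_setC row2 ?inE.
  by exists (i1, j); rewrite ?inE // negbK row1 ?inE.
have rows_straddle j1 j2 : grid_col j1 \subset A -> grid_col j2 \subset ~: A ->
    a <= #|cut_edges grid A (~: A)|.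
  move=> /subsetP col1 /subsetP col2; apply: leq_trans card_straddling_grid_rows.
  rewrite -[leqLHS]card_ord -cardsT; apply/subset_leq_card/subsetP => i _.
  rewrite inE; apply/andP; split; apply/subsetPn.
    by exists (i, j2); rewrite ?inE // -in_setC col2 ?inE.
  by exists (i, j1); rewrite ?inE // negbK col1 ?inE.
have lines_meet (S S' : {set 'I_a * 'I_b}) i j :
    grid_row i \subset S -> grid_col j \subset S' -> (i, j) \in S :&: S'.
  by move=> /subsetP rowS /subsetP colS'; rewrite inE rowS ?colS' ?inE.
case/orP => /existsP[k1 line1]; case/orP => /existsP[k2 line2].
- by rewrite geq_min (cols_straddle k1 k2) ?orbT.
- by have := lines_meet _ _ k1 k2 line1 line2; rewrite setICr inE.
- by have := lines_meet _ _ k2 k1 line2 line1; rewrite setIC setICr inE.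
- by rewrite geq_min (rows_straddle k1 k2).
Qed.

Lemma card_compl_le_cut_sq :
  ~~ has_grid_line (~: A) -> #|~: A| <= #|cut_edges grid A (~: A)| ^ 2.
Proof.
rewrite negb_or !negb_exists => /andP[/forallP rows_meet /forallP cols_meet].
rewrite -mulnn; apply: leq_trans (leq_mul card_straddling_grid_rows card_straddling_grid_cols).
rewrite -cardsX; apply/subset_leq_card/subsetP => -[i j] ijA.
rewrite !inE /straddles rows_meet cols_meet !andbT; apply/andP; split; apply/subsetPn.
  by exists (i, j); rewrite ?inE // -in_setC.
by exists (i, j); rewrite ?inE // -in_setC.
Qed.

End GridCut.

Lemma grid_minor_reps_cut_bound a b r1 r2
  (mu1 : 'I_r1 * 'I_r1 -> {set 'I_a * 'I_b}) (mu2 : 'I_r2 * 'I_r2 -> {set 'I_a * 'I_b})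
  (q1 : 'I_r1 * 'I_r1 -> 'I_a * 'I_b) (q2 : 'I_r2 * 'I_r2 -> 'I_a * 'I_b)
  (A : {set 'I_a * 'I_b}) :
  minor_map (@grid_adj r1 r1) (@grid_adj a b) mu1 ->
  minor_map (@grid_adj r2 r2) (@grid_adj a b) mu2 ->
  (forall v, v \in first_row r1 -> q1 v \in mu1 v) ->
  (forall v, v \in first_row r2 -> q2 v \in mu2 v) ->
  minn #|A :&: (q1 @: first_row r1 :|: q2 @: first_row r2)|
       #|~: A :&: (q1 @: first_row r1 :|: q2 @: first_row r2)|
    <= 6 * #|cut_edges (@grid_adj a b) A (~: A)|.
Proof.
move=> mu1_minor mu2_minor q1P q2P; set X := _ :|: _.
have grid_sym := @grid_adj_sym a b.
have compl_le B : ~~ has_grid_line (~: B) ->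
    #|~: B :&: X| <= 6 * #|cut_edges (@grid_adj a b) B (~: B)|.
  move=> /card_compl_le_cut_sq card_out; rewrite setIUr; apply: leq_trans (leq_card_setU _ _) _.
  apply: leq_trans (leq_add (card_reps_compl_le_cut grid_sym mu1_minor q1P card_out)
                           (card_reps_compl_le_cut grid_sym mu2_minor q2P card_out)) _.
  by rewrite -mulnDl.
have X_le : #|X| <= r1 + r2.
  apply: leq_trans (leq_card_setU _ _) (leq_add _ _).
    exact: leq_trans (leq_imset_card _ _) (card_first_row r1).
  exact: leq_trans (leq_imset_card _ _) (card_first_row r2).
clearbody X.
have [lineC | noLineC] := boolP (has_grid_line (~: A)); last first.
  exact: leq_trans (geq_minr _ _) (compl_le A noLineC).
have [lineA | noLineA] := boolP (has_grid_line A); last first.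
  rewrite -(setCK A) in noLineA.
  by have := compl_le _ noLineA; rewrite setCK card_cut_edgesC //; apply: leq_trans (geq_minl _ _).
have := grid_dims_le_cut lineA lineC.
have := grid_minor_le_dims mu1_minor; have := grid_minor_le_dims mu2_minor.
have : minn #|A :&: X| #|~: A :&: X| <= #|X|.
  exact: leq_trans (geq_minl _ _) (subset_leq_card (subsetIr A X)).
lia.
Qed.

Theorem lemma10 (a b r1 r2 : nat)
  (mu1 : 'I_r1 * 'I_r1 -> {set 'I_a * 'I_b})
  (mu2 : 'I_r2 * 'I_r2 -> {set 'I_a * 'I_b})
  (q1 : 'I_r1 * 'I_r1 -> 'I_a * 'I_b)
  (q2 : 'I_r2 * 'I_r2 -> 'I_a * 'I_b) :
  (0 < r1)%N -> (r1 <= r2)%N ->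
  minor_map (@grid_adj r1 r1) (@grid_adj a b) mu1 ->
  minor_map (@grid_adj r2 r2) (@grid_adj a b) mu2 ->
  mu_img mu1 setT :&: mu_img mu2 setT = set0 ->
  (forall v, v \in first_row r1 -> q1 v \in mu1 v) ->
  (forall v, v \in first_row r2 -> q2 v \in mu2 v) ->
  cut_linked (@grid_adj a b) (1 / 384)%R
    ((q1 @: first_row r1) :|: (q2 @: first_row r2)).
Proof.
(* The bound holds with 1/6. *)
move=> _ _ mu1_minor mu2_minor _ q1P q2P A B AB_disj AB_cover.
have -> : B = ~: A.
  apply/setP => v; rewrite inE; case vA: (v \in A); first exact: disjointFr AB_disj vA.
  have : v \in A :|: B by rewrite AB_cover inE.
  by rewrite inE vA.
have := grid_minor_reps_cut_bound A mu1_minor mu2_minor q1P q2P.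
set m := minn _ _; set s := #|_| => bound.
have : (m%:R <= 6 * s%:R :> rat)%R by rewrite -natrM ler_nat.
have : (0 <= s%:R :> rat)%R by rewrite ler0n.
lra.
Qed.
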